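(* Let $\mathsf{V}$ be a variety of semilinear residuated lattices (or a variety of semilinear $\mathsf{FL}$-algebras) with the congruence extension property, such that the algebras $\mathbf{A}$, $\mathbf{B}$, $\mathbf{C}$ described in the context belong to $\mathsf{V}$ (in the $\mathsf{FL}$-algebra case, each of them is considered with the constant $0$ interpreted as its bottom element $u$). Then $\mathsf{V}$ does not have the amalgamation property.
   Context: A residuated lattice is an algebra $(L,\wedge,\vee,\cdot,\backslash,/,1)$ where $(L,\wedge,\vee)$ is a lattice, $(L,\cdot,1)$ is a monoid, and $xy\le z \iff y\le x\backslash z \iff x\le z/y$. An $\mathsf{FL}$-algebra is a residuated lattice with an additional constant $0$. A residuated lattice (or $\mathsf{FL}$-algebra) is semilinear if it is a subdirect product of totally ordered ones. It is integral if $1$ is the top element; commutative if $\cdot$ is commutative, in which case $x\backslash y=y/x$ is written $x\to y$. In a chain, $x\to y=\max\{z: xz\le y\}$, and in an integral chain $x\to y=1$ whenever $x\le y$. The algebras (all commutative, integral, totally ordered, with $1$ the multiplicative identity and top): - $\mathbf{A}$: universe $u<v<1$, $xy=\min(x,y)$, and $x\to y=1$ if $x\le y$, $x\to y=y$ otherwise. - $\mathbf{B}$: universe $u<b<v<1$, with $v\cdot v=v$, $v\cdot b=b$, $v\cdot u=u$, $b\cdot b=u$, $b\cdot u=u$, $u\cdot u=u$; residuals: $x\to y=1$ if $x\le y$, and $v\to b=b$, $v\to u=u$, $b\to u=b$. - $\mathbf{C}$: universe $u<d<c<v<1$, with $v\cdot v=v$, $v\cdot c=d$, $v\cdot d=d$,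 $v\cdot u=u$, $c\cdot c=c\cdot d=d\cdot d=u$, and $x\cdot u=u$ for all $x$; residuals: $x\to y=1$ if $x\le y$, and $v\to c=c$, $v\to d=c$, $v\to u=u$, $c\to d=v$, $c\to u=c$, $d\to u=c$. An algebra $\mathbf{M}$ has the congruence extension property (CEP) if for every subalgebra $\mathbf{N}$ of $\mathbf{M}$ and every congruence $\Theta$ of $\mathbf{N}$ there is a congruence $\Phi$ of $\mathbf{M}$ with $\Phi\cap N^2=\Theta$; a class has the CEP if each member does. A V-formation in a class $\mathsf{K}$ is a tuple $(\mathbf{P},\mathbf{Q},\mathbf{R},i,j)$ with $\mathbf{P},\mathbf{Q},\mathbf{R}\in\mathsf{K}$ and $i\colon\mathbf{P}\to\mathbf{Q}$, $j\colon\mathbf{P}\to\mathbf{R}$ embeddings; an amalgam in $\mathsf{K}$ is $(\mathbf{D},h,k)$ with $\mathbf{D}\in\mathsf{K}$ and embeddings $h\colon\mathbf{Q}\to\mathbf{D}$, $k\colon\mathbf{R}\to\mathbf{D}$ with $h\circ i=k\circ j$. $\mathsf{K}$ has the amalgamation property (AP) if every V-formation in $\mathsf{K}$ has an amalgam in $\mathsf{K}$. *)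

From Stdlib Require Import Arith.

Set Implicit Arguments.

Record rl := RL {
  car :> Type;
  meet : car -> car -> car;
  join : car -> car -> car;
  mul  : car -> car -> car;
  ldiv : car -> car -> car;   (* ldiv x y = x \ y *)
  rdiv : car -> car -> car;   (* rdiv x y = x / y *)
  one  : car;
  meetC : forall x y, meet x y = meet y x;
  meetA : forall x y z, meet x (meet y z) = meet (meet x y) z;
  joinC : forall x y, join x y = join y x;
  joinA : forall x y z, join x (join y z) = join (join x y) z;
  absorb_mj : forall x y, meet x (join x y) = x;
  absorb_jm : forall x y, join x (meet x y) = x;
  mulA : forall x y z, mul x (mul y z) = mul (mul x y) z;
  mul1l : forall x, mul one x = x;
  mul1r : forall x, mul x one = x;
  (* x y <= z  <->  y <= x \ z  <->  x <= z / y ; with a <= b := a /\ b = a *)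
  resid_l : forall x y z, meet (mul x y) z = mul x y <-> meet y (ldiv x z) = y;
  resid_r : forall x y z, meet (mul x y) z = mul x y <-> meet x (rdiv z y) = x
}.

Arguments meet {r} _ _.
Arguments join {r} _ _.
Arguments mul {r} _ _.
Arguments ldiv {r} _ _.
Arguments rdiv {r} _ _.
Arguments one {r}.

Definition le (M : rl) (x y : M) : Prop := meet x y = x.

Record fl := FL { flrl :> rl; zero : flrl }.
Arguments zero {f}.

Definition rl_hom (M N : rl) (f : M -> N) : Prop :=
  (forall x y, f (meet x y) = meet (f x) (f y)) /\
  (forall x y, f (join x y) = join (f x) (f y)) /\
  (forall x y, f (mul x y) = mul (f x) (f y)) /\
  (forall x y, f (ldiv x y) = ldiv (f x) (f y)) /\
  (forall x y, f (rdiv x y) = rdiv (f x) (f y)) /\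
  f one = one.

Arguments rl_hom {M N} f.

Definition fl_hom (M N : fl) (f : M -> N) : Prop :=
  rl_hom f /\ f zero = zero.

Definition injective {X Y : Type} (f : X -> Y) : Prop :=
  forall x y, f x = f y -> x = y.

Definition surjective {X Y : Type} (f : X -> Y) : Prop :=
  forall y, exists x, f x = y.

Arguments fl_hom {M N} f.
Definition rl_emb (M N : rl) (f : M -> N) : Prop := rl_hom f /\ injective f.
Definition fl_emb (M N : fl) (f : M -> N) : Prop := fl_hom f /\ injective f.
Arguments rl_emb {M N} f.
Arguments fl_emb {M N} f.

Definition rl_subalg (M : rl) (S : M -> Prop) : Prop :=
  S one /\
  forall x y, S x -> S y ->
    S (meet x y) /\ S (join x y) /\ S (mul x y) /\ S (ldiv x y) /\ S (rdiv x y).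

Arguments rl_subalg {M} S.
Definition fl_subalg (M : fl) (S : M -> Prop) : Prop :=
  rl_subalg S /\ S zero.

Arguments fl_subalg {M} S.
(** th is a congruence of the subalgebra with universe S
    (a relation on S, i.e. a relation on M supported in S). Constants
    (1 and 0) are trivially compatible, so this notion is the same for
    residuated lattices and FL-algebras. *)
Definition cong_on (M : rl) (S : M -> Prop) (th : M -> M -> Prop) : Prop :=
  (forall x y, th x y -> S x /\ S y) /\
  (forall x, S x -> th x x) /\
  (forall x y, th x y -> th y x) /\
  (forall x y z, th x y -> th y z -> th x z) /\
  (forall x x' y y', th x x' -> th y y' ->
     th (meet x y) (meet x' y') /\ th (join x y) (join x' y') /\
     th (mul x y) (mul x' y') /\ th (ldiv x y) (ldiv x' y') /\
     th (rdiv x y) (rdiv x' y')).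

Arguments cong_on {M} S th.
Definition congruence (M : rl) (th : M -> M -> Prop) : Prop :=
  cong_on (fun _ : M => True) th.
Arguments congruence {M} th.

Definition rl_CEP (M : rl) : Prop :=
  forall S : M -> Prop, rl_subalg S ->
  forall th, cong_on S th ->
  exists phi, congruence phi /\
    (forall x y, S x -> S y -> (phi x y <-> th x y)).

Definition fl_CEP (M : fl) : Prop :=
  forall S : M -> Prop, fl_subalg S ->
  forall th : M -> M -> Prop, @cong_on M S th ->
  exists phi, @congruence M phi /\
    (forall x y, S x -> S y -> (phi x y <-> th x y)).

Arguments le {M} x y.
Definition chain (M : rl) : Prop := forall x y : M, le x y \/ le y x.

(** M is a subdirect product of totally ordered algebras: there is a family
    of chains C_i and surjective homomorphisms h_i : M -> C_i which jointly
    separate points (equivalently, the induced map M -> prod_i C_i is an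
    embedding all of whose projections are onto). *)
Definition rl_semilinear (M : rl) : Prop :=
  exists (I : Type) (C : I -> rl) (h : forall i, M -> C i),
    (forall i, chain (C i)) /\
    (forall i, rl_hom (h i)) /\
    (forall i, surjective (h i)) /\
    (forall x y, (forall i, h i x = h i y) -> x = y).

Definition fl_semilinear (M : fl) : Prop :=
  exists (I : Type) (C : I -> fl) (h : forall i, M -> C i),
    (forall i, chain (C i)) /\
    (forall i, fl_hom (h i)) /\
    (forall i, surjective (h i)) /\
    (forall x y, (forall i, h i x = h i y) -> x = y).

Definition rl_AP (K : rl -> Prop) : Prop :=
  forall P Q R : rl, K P -> K Q -> K R ->
  forall (i : P -> Q) (j : P -> R), rl_emb i -> rl_emb j ->
  exists D : rl, K D /\
    exists (h : Q -> D) (k : R -> D),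
      rl_emb h /\ rl_emb k /\ (forall x, h (i x) = k (j x)).

Definition fl_AP (K : fl -> Prop) : Prop :=
  forall P Q R : fl, K P -> K Q -> K R ->
  forall (i : P -> Q) (j : P -> R), fl_emb i -> fl_emb j ->
  exists D : fl, K D /\
    exists (h : Q -> D) (k : R -> D),
      fl_emb h /\ fl_emb k /\ (forall x, h (i x) = k (j x)).

Inductive term : Type :=
| Var  : nat -> term
| TMeet : term -> term -> term
| TJoin : term -> term -> term
| TMul  : term -> term -> term
| TLdiv : term -> term -> term
| TRdiv : term -> term -> term
| TOne  : term
| TZero : term.

Fixpoint zfree (t : term) : bool :=
  match t with
  | Var _ | TOne => true
  | TZero => false
  | TMeet a b | TJoin a b | TMul a b | TLdiv a b | TRdiv a b =>
      zfree a && zfree b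
  end.

Fixpoint eval (M : rl) (z : M) (v : nat -> M) (t : term) : M :=
  match t with
  | Var n => v n
  | TMeet a b => meet (eval M z v a) (eval M z v b)
  | TJoin a b => join (eval M z v a) (eval M z v b)
  | TMul a b => mul (eval M z v a) (eval M z v b)
  | TLdiv a b => ldiv (eval M z v a) (eval M z v b)
  | TRdiv a b => rdiv (eval M z v a) (eval M z v b)
  | TOne => one
  | TZero => z
  end.

Arguments eval {M} z v t.
(** For residuated lattices, E is required (in the
    theorem) to consist of 0-free equations, so the interpretation of 0 used
    here (1) is irrelevant. *)
Definition rl_models (E : term -> term -> Prop) (M : rl) : Prop :=
  forall s t, E s t -> forall v : nat -> M, eval one v s = eval one v t.

Definition fl_models (E : term -> term -> Prop) (M : fl) : Prop :=
  forall s t, E s t -> forall v : nat -> M, @eval M zero v s = @eval M zero v t.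

Inductive EA := Au | Av | A1.
Definition rkA (x : EA) : nat := match x with Au => 0 | Av => 1 | A1 => 2 end.
Definition minA (x y : EA) := if rkA x <=? rkA y then x else y.
Definition maxA (x y : EA) := if rkA x <=? rkA y then y else x.
Definition impA (x y : EA) := if rkA x <=? rkA y then A1 else y.

Definition alg_A_rl : rl.
Proof.
  refine (@RL EA minA maxA minA impA (fun z y => impA y z) A1 _ _ _ _ _ _ _ _ _ _ _);
  intros; repeat match goal with x : EA |- _ => destruct x end; simpl;
  try reflexivity; split; intro H; first [reflexivity | discriminate].
Defined.

Inductive EB := Bu | Bb | Bv | B1.
Definition rkB (x : EB) : nat := match x with Bu => 0 | Bb => 1 | Bv => 2 | B1 => 3 end.
Definition minB (x y : EB) := if rkB x <=? rkB y then x else y.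
Definition maxB (x y : EB) := if rkB x <=? rkB y then y else x.
Definition mulB (x y : EB) : EB :=
  match x, y with
  | B1, _ => y
  | _, B1 => x
  | Bv, Bv => Bv
  | Bv, Bb | Bb, Bv => Bb
  | Bv, Bu | Bu, Bv => Bu
  | Bb, Bb => Bu
  | Bb, Bu | Bu, Bb => Bu
  | Bu, Bu => Bu
  end.
Definition impB (x y : EB) : EB :=
  if rkB x <=? rkB y then B1 else
  match x, y with
  | B1, _ => y
  | Bv, Bb => Bb
  | Bv, Bu => Bu
  | Bb, Bu => Bb
  | _, _ => B1 (* unreachable: x <= y *)
  end.

Definition alg_B_rl : rl.
Proof.
  refine (@RL EB minB maxB mulB impB (fun z y => impB y z) B1 _ _ _ _ _ _ _ _ _ _ _);
  intros; repeat match goal with x : EB |- _ => destruct x end; simpl;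
  try reflexivity; split; intro H; first [reflexivity | discriminate].
Defined.

Inductive EC := Cu | Cd | Cc | Cv | C1.
Definition rkC (x : EC) : nat :=
  match x with Cu => 0 | Cd => 1 | Cc => 2 | Cv => 3 | C1 => 4 end.
Definition minC (x y : EC) := if rkC x <=? rkC y then x else y.
Definition maxC (x y : EC) := if rkC x <=? rkC y then y else x.
Definition mulC (x y : EC) : EC :=
  match x, y with
  | C1, _ => y
  | _, C1 => x
  | _, Cu | Cu, _ => Cu
  | Cv, Cv => Cv
  | Cv, Cc | Cc, Cv => Cd
  | Cv, Cd | Cd, Cv => Cd
  | Cc, Cc => Cu
  | Cc, Cd | Cd, Cc => Cu
  | Cd, Cd => Cu
  end.
Definition impC (x y : EC) : EC :=
  if rkC x <=? rkC y then C1 else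
  match x, y with
  | C1, _ => y
  | Cv, Cc => Cc
  | Cv, Cd => Cc
  | Cv, Cu => Cu
  | Cc, Cd => Cv
  | Cc, Cu => Cc
  | Cd, Cu => Cc
  | _, _ => C1 (* unreachable: x <= y *)
  end.

Definition alg_C_rl : rl.
Proof.
  refine (@RL EC minC maxC mulC impC (fun z y => impC y z) C1 _ _ _ _ _ _ _ _ _ _ _);
  intros; repeat match goal with x : EC |- _ => destruct x end; simpl;
  try reflexivity; split; intro H; first [reflexivity | discriminate].
Defined.

Definition alg_A_fl : fl := @FL alg_A_rl Au.
Definition alg_B_fl : fl := @FL alg_B_rl Bu.
Definition alg_C_fl : fl := @FL alg_C_rl Cu.


Set Implicit Arguments.

(* Let A embed into B and C by u, v, 1 |-> u, v, 1, and suppose D amalgamates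
   them via h : B -> D and k : C -> D.  Both b and c satisfy x x = u and
   x \ u = x, and in a chain there is at most one such x: if x <= y then
   x y <= y y = u, so y <= x \ u = x.  As D is a subdirect product of chains,
   h b = k c.  Then k d = k (v c) = h v * h b = h (v b) = h b = k c, although
   d <> c and k is injective.  So this V-formation has no amalgam in any class
   of semilinear algebras. *)

Lemma le_refl (M : rl) (x : M) : le x x.
Proof.
  unfold le. pose proof (absorb_mj M x (meet x x)) as H.
  rewrite (absorb_jm M x x) in H. exact H.
Qed.

Lemma le_trans (M : rl) (x y z : M) : le x y -> le y z -> le x z.
Proof.
  unfold le; intros Hxy Hyz. rewrite <- Hxy, <- meetA, Hyz. reflexivity.
Qed.

Lemma le_antisym (M : rl) (x y : M) : le x y -> le y x -> x = y.
Proof.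
  unfold le; intros Hxy Hyx.
  transitivity (meet x y); [symmetry; exact Hxy | rewrite meetC; exact Hyx].
Qed.

Lemma mul_le_mono_r (M : rl) (x y z : M) : le x y -> le (mul x z) (mul y z).
Proof.
  intros Hxy. apply (proj2 (resid_r M x z (mul y z))).
  apply (le_trans Hxy). apply (proj1 (resid_r M y z (mul y z))). apply le_refl.
Qed.

Lemma le_rev_of_sq_ldiv (M : rl) (x y u : M) :
  le x y -> mul y y = u -> ldiv x u = x -> le y x.
Proof.
  intros Hxy Hyy Hxu.
  assert (Hxy_u : le (mul x y) u) by (rewrite <- Hyy; apply mul_le_mono_r, Hxy).
  rewrite <- Hxu. exact (proj1 (resid_l M x y u) Hxy_u).
Qed.

Lemma chain_sq_ldiv_uniq (M : rl) (x y u : M) : chain M ->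
  mul x x = u -> ldiv x u = x -> mul y y = u -> ldiv y u = y -> x = y.
Proof.
  intros Hch Hxx Hxu Hyy Hyu.
  destruct (Hch x y) as [Hxy | Hyx].
  - apply le_antisym; [exact Hxy | exact (le_rev_of_sq_ldiv Hxy Hyy Hxu)].
  - apply le_antisym; [exact (le_rev_of_sq_ldiv Hyx Hxx Hyu) | exact Hyx].
Qed.

Lemma semilinear_sq_ldiv_uniq (M : rl) (x y u : M) : rl_semilinear M ->
  mul x x = u -> ldiv x u = x -> mul y y = u -> ldiv y u = y -> x = y.
Proof.
  intros [I [C [h [Hch [Hh [_ Hsep]]]]]] Hxx Hxu Hyy Hyu.
  apply Hsep; intro j.
  destruct (Hh j) as [_ [_ [hmul [hldiv _]]]].
  apply (chain_sq_ldiv_uniq (u := h j u) (Hch j));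
    rewrite <- ?hmul, <- ?hldiv; congruence.
Qed.

Lemma fl_semilinear_rl (M : fl) : fl_semilinear M -> rl_semilinear M.
Proof.
  intros [I [C [h [Hch [Hh [Hsurj Hsep]]]]]].
  exists I, (fun i => flrl (C i)), h.
  split; [exact Hch | split; [intro i; exact (proj1 (Hh i)) | split; assumption]].
Qed.

Lemma fl_emb_of_rl_emb {M N : fl} (f : M -> N) :
  rl_emb f -> f zero = zero -> fl_emb f.
Proof. intros [Hf Hinj] Hzero. exact (conj (conj Hf Hzero) Hinj). Qed.

Definition emb_AB (x : alg_A_rl) : alg_B_rl :=
  match x with Au => Bu | Av => Bv | A1 => B1 end.
Definition emb_AC (x : alg_A_rl) : alg_C_rl :=
  match x with Au => Cu | Av => Cv | A1 => C1 end.

Lemma emb_AB_rl_emb : rl_emb emb_AB.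
Proof.
  split.
  - repeat split; try (intros x y; destruct x, y); reflexivity.
  - intros x y; destruct x, y; simpl; congruence.
Qed.

Lemma emb_AC_rl_emb : rl_emb emb_AC.
Proof.
  split.
  - repeat split; try (intros x y; destruct x, y); reflexivity.
  - intros x y; destruct x, y; simpl; congruence.
Qed.

Lemma no_semilinear_amalgam_BC (D : rl) (h : alg_B_rl -> D) (k : alg_C_rl -> D) :
  rl_semilinear D -> rl_hom h -> rl_emb k ->
  (forall x, h (emb_AB x) = k (emb_AC x)) -> False.
Proof.
  intros HD [_ [_ [hmul [hldiv _]]]] [[_ [_ [kmul [kldiv _]]]] Hk] Hhk.
  pose proof (Hhk Au) as Hu; pose proof (Hhk Av) as Hv; simpl in Hu, Hv.
  assert (Hbc : h Bb = k Cc).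
  { apply (semilinear_sq_ldiv_uniq (u := k Cu) HD).
    - rewrite <- hmul. exact Hu.
    - rewrite <- Hu, <- hldiv. reflexivity.
    - rewrite <- kmul. reflexivity.
    - rewrite <- kldiv. reflexivity. }
  assert (Hdc : k Cd = k Cc).
  { change (k (mul (Cv : alg_C_rl) Cc) = k Cc).
    rewrite kmul, <- Hbc, <- Hv, <- hmul. reflexivity. }
  discriminate (Hk _ _ Hdc).
Qed.

Lemma rl_semilinear_not_AP (K : rl -> Prop) :
  (forall M, K M -> rl_semilinear M) ->
  K alg_A_rl -> K alg_B_rl -> K alg_C_rl -> ~ rl_AP K.
Proof.
  intros Hsl HA HB HC AP.
  destruct (AP _ _ _ HA HB HC _ _ emb_AB_rl_emb emb_AC_rl_emb)
    as [D [HD [h [k [[Hh _] [Hk Hhk]]]]]].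
  exact (no_semilinear_amalgam_BC (Hsl D HD) Hh Hk Hhk).
Qed.

Lemma fl_semilinear_not_AP (K : fl -> Prop) :
  (forall M, K M -> fl_semilinear M) ->
  K alg_A_fl -> K alg_B_fl -> K alg_C_fl -> ~ fl_AP K.
Proof.
  intros Hsl HA HB HC AP.
  destruct (AP _ _ _ HA HB HC emb_AB emb_AC
              (@fl_emb_of_rl_emb alg_A_fl alg_B_fl _ emb_AB_rl_emb eq_refl)
              (@fl_emb_of_rl_emb alg_A_fl alg_C_fl _ emb_AC_rl_emb eq_refl))
    as [D [HD [h [k [[[Hh _] _] [[[Hk _] Hkinj] Hhk]]]]]].
  exact (no_semilinear_amalgam_BC (fl_semilinear_rl (Hsl D HD)) Hh (conj Hk Hkinj) Hhk).
Qed.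

Theorem mainTheorem4 :
  (forall E : term -> term -> Prop,
     (forall s t, E s t -> zfree s = true /\ zfree t = true) ->
     (forall M : rl, rl_models E M -> rl_semilinear M) ->
     (forall M : rl, rl_models E M -> rl_CEP M) ->
     rl_models E alg_A_rl -> rl_models E alg_B_rl -> rl_models E alg_C_rl ->
     ~ rl_AP (rl_models E))
  /\
  (forall E : term -> term -> Prop,
     (forall M : fl, fl_models E M -> fl_semilinear M) ->
     (forall M : fl, fl_models E M -> fl_CEP M) ->
     fl_models E alg_A_fl -> fl_models E alg_B_fl -> fl_models E alg_C_fl ->
     ~ fl_AP (fl_models E)).
Proof.
  split.
  - intros E _ Hsl _. exact (rl_semilinear_not_AP Hsl).
  - intros E Hsl _. exact (fl_semilinear_not_AP Hsl).
Qed.
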